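(* For all $\theta,\theta'\in\Theta$, $$\|\pi^\rho_\theta\,d\lambda-\pi^\rho_{\theta'}\,d\lambda\|_{TV}\le 2(d-1)\sum_{i=1}^d\Big|1-\frac{\rho(\theta'(i))}{\rho(\theta(i))}\Big|.$$
   Context: Let $\mathsf X\subset\mathbb R^D$ be measurable, $\lambda$ a nonnegative reference measure, $\pi$ a probability density on $\mathsf X$ w.r.t. $\lambda$. $\mathsf X=\bigcup_{i=1}^d\mathsf X_i$ is a partition into disjoint measurable strata, $\theta_\star(i)=\int_{\mathsf X_i}\pi\,d\lambda$ (assumed positive), $\Theta=\{\theta\in(0,1)^d:\sum_i\theta(i)=1\}$. For a measurable $\rho:(0,1)\to(0,\infty)$ and $\theta\in\Theta$, $\pi^\rho_\theta(x)=(Z^\rho_\theta)^{-1}\sum_{i}\frac{\pi(x)}{\rho(\theta(i))}\mathbf 1_{\mathsf X_i}(x)$ with $Z^\rho_\theta=\sum_i\frac{\theta_\star(i)}{\rho(\theta(i))}$. For a signed measure $\nu$, $\|\nu\|_{TV}=\sup\{|\nu(f)|: f \text{ measurable},\ \sup_{\mathsf X}|f|\le1\}$. *)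

From HB Require Import structures.
From mathcomp Require Import all_boot all_order all_algebra.
From mathcomp Require Import all_classical all_reals all_analysis.
Set Implicit Arguments. Unset Strict Implicit. Unset Printing Implicit Defensive.
Import Order.TTheory GRing.Theory Num.Theory.
Local Open Scope classical_set_scope.
Local Open Scope ring_scope.

Section Defs.
Context {d0 : measure_display} {T : measurableType d0} {R : realType}.

Definition theta_star (lam : {measure set T -> \bar R}) (pi : T -> R)
  (d : nat) (S : 'I_d -> set T) (i : 'I_d) : R :=
  fine (\int[lam]_(x in S i) (pi x)%:E).

Definition in_Theta (d : nat) (th : 'I_d -> R) : Prop :=
  (forall i, 0 < th i < 1) /\ \sum_(i < d) th i = 1.

Definition Zrho (lam : {measure set T -> \bar R}) (pi : T -> R)
  (d : nat) (S : 'I_d -> set T) (rho : R -> R) (th : 'I_d -> R) : R :=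
  \sum_(i < d) theta_star lam pi S i / rho (th i).

Definition pirho (lam : {measure set T -> \bar R}) (pi : T -> R)
  (d : nat) (S : 'I_d -> set T) (rho : R -> R) (th : 'I_d -> R) (x : T) : R :=
  (Zrho lam pi S rho th)^-1 * \sum_(i < d) (pi x / rho (th i)) * \1_(S i) x.

Definition tv_norm_dens (lam : {measure set T -> \bar R}) (X : set T)
  (p q : T -> R) : \bar R :=
  ereal_sup [set `| \int[lam]_(x in X) (f x * (p x - q x))%:E |%E
            | f in [set f : T -> R | measurable_fun X f /\
                                     (forall x, X x -> `|f x| <= 1)]].

End Defs.

From HB Require Import structures.
From mathcomp Require Import all_boot all_order all_algebra.
From mathcomp Require Import all_classical all_reals all_analysis.
From mathcomp Require Import ring lra measurable_realfun.
Import Order.TTheory GRing.Theory Num.Theory.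
Local Open Scope classical_set_scope.
Local Open Scope ring_scope.

(* Both densities are mixtures sum_i a_i pi 1_{X_i} of the same nonnegative
   components, of masses theta_star(i), so the total variation of their
   difference is at most sum_i |a_i - a'_i| theta_star(i)
   = sum_i |w_i / W - w'_i / W'|, where w_i = theta_star(i) / rho(theta(i)) and
   W = sum_i w_i.  Writing w_i / W - w'_i / W' = w_i (1/W - 1/W') + (w_i - w'_i) / W'
   bounds this by 2 sum_i |w_i - w'_i| / W' <= 2 sum_i |1 - rho(theta'(i)) / rho(theta(i))|.
   Since d >= 2 on Theta, 2 <= 2 (d - 1). *)

Section NormalizedWeights.
Context {R : realFieldType} {n : nat}.

Lemma ler_term_sum (s : 'I_n -> R) i : (forall j, 0 <= s j) -> s i <= \sum_j s j.
Proof. by move=> s_ge0; rewrite (bigD1 i) //= lerDl sumr_ge0. Qed.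

Lemma sumr_ord_gt0 (s : 'I_n -> R) : (0 < n)%N -> (forall i, 0 < s i) -> 0 < \sum_i s i.
Proof.
move=> n_gt0 s_gt0; apply: lt_le_trans (s_gt0 (Ordinal n_gt0)) _.
by apply: ler_term_sum => j; apply: ltW.
Qed.

Lemma sum_dist_normalized_le (a b : 'I_n -> R) :
  (forall i, 0 <= a i) -> 0 < \sum_i a i -> 0 < \sum_i b i ->
  \sum_i `|a i / \sum_j a j - b i / \sum_j b j|
    <= 2 * (\sum_i `|a i - b i|) / \sum_j b j.
Proof.
set A := \sum_j a j; set B := \sum_j b j => a_ge0 A_gt0 B_gt0.
have termwise i : `|a i / A - b i / B| <= a i * `|A^-1 - B^-1| + `|a i - b i| / B.
  have -> : a i / A - b i / B = a i * (A^-1 - B^-1) + (a i - b i) / B by ring.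
  apply: le_trans (ler_normD _ _) _.
  by rewrite !normrM ger0_norm // [`|B^-1|]ger0_norm // invr_ge0 ltW.
have AB : A * `|A^-1 - B^-1| <= (\sum_i `|a i - b i|) / B.
  have -> : A * `|A^-1 - B^-1| = `|B - A| / B.
    have -> : B - A = A * (A^-1 - B^-1) * B by field; rewrite !gt_eqF.
    by rewrite normrM (gtr0_norm B_gt0) mulfK ?gt_eqF // normrM gtr0_norm.
  rewrite distrC ler_wpM2r ?invr_ge0 ?(ltW B_gt0) // /A /B -sumrB.
  exact: ler_norm_sum.
apply: le_trans (ler_sum _ (fun i _ => termwise i)) _.
rewrite big_split /= -mulr_suml -mulr_suml mulr2n mulrDl mul1r mulrDl.
by rewrite lerD2r.
Qed.

Lemma sum_dist_inv_weights_le (t r r' : 'I_n -> R) :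
  (0 < n)%N -> (forall i, 0 < t i) -> (forall i, 0 < r i) -> (forall i, 0 < r' i) ->
  \sum_i `|(\sum_j t j / r j)^-1 / r i - (\sum_j t j / r' j)^-1 / r' i| * t i
    <= 2 * \sum_i `|1 - r' i / r i|.
Proof.
move=> n_gt0 t_gt0 r_gt0 r'_gt0.
pose a i := t i / r i; pose b i := t i / r' i.
have a_gt0 i : 0 < a i by rewrite divr_gt0.
have b_gt0 i : 0 < b i by rewrite divr_gt0.
have B_gt0 : 0 < \sum_j b j by apply: sumr_ord_gt0.
have termE i : `|(\sum_j a j)^-1 / r i - (\sum_j b j)^-1 / r' i| * t i
    = `|a i / \sum_j a j - b i / \sum_j b j|.
  by rewrite -[t i]gtr0_norm // -normrM; congr `|_|; rewrite /a /b; ring.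
rewrite (eq_bigr _ (fun i _ => termE i)).
apply: le_trans (sum_dist_normalized_le a b (fun i => ltW (a_gt0 i)) _ B_gt0) _.
  exact: sumr_ord_gt0.
rewrite -mulrA ler_wpM2l // mulr_suml; apply: ler_sum => i _.
have -> : a i - b i = b i * (r' i / r i - 1) by rewrite /a /b; field; rewrite !gt_eqF.
rewrite normrM gtr0_norm // distrC mulrAC ler_piMl // ler_pdivrMr // mul1r.
by apply: ler_term_sum => j; apply: ltW.
Qed.

End NormalizedWeights.

Section TotalVariation.
Context {d0 : measure_display} {T : measurableType d0} {R : realType}.
Variables (lam : {measure set T -> \bar R}) (X : set T).
Hypothesis mX : measurable X.

Lemma tv_norm_dens_le_integral (p q : T -> R) :
  measurable_fun X (fun x => p x - q x) ->
  (tv_norm_dens lam X p q <= \int[lam]_(x in X) `|p x - q x|%:E)%E.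
Proof.
move=> mpq; apply/ereal_supP => _ [f [mf f_le1] <-].
have mfpq : measurable_fun X (fun x => f x * (p x - q x)) by exact: measurable_funM.
apply: le_trans (le_abse_integral lam mX _) _; first exact/measurable_EFinP.
apply: ge0_le_integral => //.
- by apply: measurableT_comp => //; exact/measurable_EFinP.
- by apply/measurable_EFinP; exact: measurableT_comp.
- by move=> x Xx; rewrite lee_fin normrM ler_piMl // f_le1.
Qed.

Lemma integral_norm_comb_le (n : nat) (c m : 'I_n -> R) (g : 'I_n -> T -> R) :
  (forall i, measurable_fun X (g i)) -> (forall i x, X x -> 0 <= g i x) ->
  (forall i, \int[lam]_(x in X) (g i x)%:E = (m i)%:E)%E ->
  (\int[lam]_(x in X) `|\sum_i c i * g i x|%:E <= (\sum_i `|c i| * m i)%:E)%E.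
Proof.
move=> mg g_ge0 g_int.
have mcg i : measurable_fun X (fun x => `|c i| * g i x).
  by apply: measurable_funM => //; exact: measurable_cst.
apply: (@le_trans _ _ (\int[lam]_(x in X) (\sum_i `|c i| * g i x)%:E)%E).
  apply: ge0_le_integral => //.
  - apply/measurable_EFinP; apply: measurableT_comp => //.
    by apply: measurable_sum => i; apply: measurable_funM => //; exact: measurable_cst.
  - by apply/measurable_EFinP; apply: measurable_sum.
  move=> x Xx; rewrite lee_fin; apply: le_trans (ler_norm_sum _ _ _) _.
  by apply: ler_sum => i _; rewrite normrM (ger0_norm (g_ge0 i x Xx)).
under eq_integral do rewrite -sumEFin.
have cg_ge0 i x : X x -> (0 <= (`|c i| * g i x)%:E)%E.
  by move=> Xx; rewrite lee_fin mulr_ge0 ?g_ge0.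
rewrite ge0_integral_sum // => [|i]; last exact/measurable_EFinP.
rewrite -sumEFin lee_sum // => i _.
under eq_integral do rewrite EFinM.
rewrite ge0_integralZl_EFin ?g_int //.
- by move=> x Xx; rewrite lee_fin g_ge0.
- exact/measurable_EFinP.
Qed.

End TotalVariation.

Lemma in_Theta_gt1 (R : realType) (d : nat) (th : 'I_d -> R) : in_Theta th -> (1 < d)%N.
Proof.
case: d th => [|[|d]] // th [th_01 th_sum].
  by move: th_sum; rewrite big_ord0 => /eqP; rewrite eq_sym oner_eq0.
by move: th_sum (th_01 ord0); rewrite big_ord1 => ->; rewrite ltxx andbF.
Qed.

Section Stratification.
Context {d0 : measure_display} {T : measurableType d0} {R : realType}.
Variables (lam : {measure set T -> \bar R}) (pi : T -> R).
Variables (d : nat) (S : 'I_d -> set T) (rho : R -> R).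

Lemma pirhoE th x : pirho lam pi S rho th x
  = \sum_i (Zrho lam pi S rho th)^-1 / rho (th i) * (pi x * \1_(S i) x).
Proof. by rewrite /pirho mulr_sumr; apply: eq_bigr => i _; ring. Qed.

Lemma integral_indic_theta_star (X : set T) i :
  S i `<=` X -> 0 < theta_star lam pi S i ->
  (\int[lam]_(x in X) (pi x * \1_(S i) x)%:E = (theta_star lam pi S i)%:E)%E.
Proof.
move=> SX; rewrite /theta_star.
have -> : (\int[lam]_(x in X) (pi x * \1_(S i) x)%:E = \int[lam]_(x in S i) (pi x)%:E)%E.
  rewrite -[in RHS](setIidr SX) integral_mkcondr epatch_indic.
  by apply: eq_integral => x _; rewrite EFinM.
by case: (\int[lam]_(x in S i) _)%E => [r _||] //=; rewrite ltxx.
Qed.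

End Stratification.

Theorem lemma6p2 (d0 : measure_display) (T : measurableType d0) (R : realType)
  (X : set T) (lam : {measure set T -> \bar R}) (pi : T -> R)
  (d : nat) (S : 'I_d -> set T) (rho : R -> R)
  (mX : measurable X)
  (pi_meas : measurable_fun X pi)
  (pi_ge0 : forall x, X x -> 0 <= pi x)
  (pi_prob : (\int[lam]_(x in X) (pi x)%:E = 1)%E)
  (S_meas : forall i, measurable (S i))
  (S_disj : forall i j, i != j -> S i `&` S j = set0)
  (S_cover : \bigcup_(i in [set: 'I_d]) S i = X)
  (theta_star_pos : forall i, 0 < theta_star lam pi S i)
  (rho_meas : measurable_fun (`]0, 1[ : set R) rho)
  (rho_pos : forall t, 0 < t < 1 -> 0 < rho t)
  (th th' : 'I_d -> R) (hth : in_Theta th) (hth' : in_Theta th') :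
  (tv_norm_dens lam X (pirho lam pi S rho th) (pirho lam pi S rho th')
   <= (2 * (d%:R - 1) * \sum_(i < d) `| 1 - rho (th' i) / rho (th i) |)%:E)%E.
Proof.
have d_gt1 : (1 < d)%N by exact: in_Theta_gt1 hth.
have rho_th_gt0 u : in_Theta u -> forall i, 0 < rho (u i).
  by move=> [u_01 _] i; apply: rho_pos.
pose g i x := pi x * \1_(S i) x.
pose c i := (Zrho lam pi S rho th)^-1 / rho (th i)
          - (Zrho lam pi S rho th')^-1 / rho (th' i).
have pqE x : pirho lam pi S rho th x - pirho lam pi S rho th' x = \sum_i c i * g i x.
  by rewrite !pirhoE -sumrB; apply: eq_bigr => i _; rewrite mulrBl.
have SX i : S i `<=` X by move=> x Sx; rewrite -S_cover; exists i.
have mg i : measurable_fun X (g i).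
  by apply: measurable_funM => //; exact: measurable_indic.
have g_ge0 i x : X x -> 0 <= g i x by move=> Xx; rewrite mulr_ge0 ?pi_ge0.
apply: le_trans (tv_norm_dens_le_integral lam _ mX _ _ _) _.
  rewrite (funext pqE); apply: measurable_sum => i.
  by apply: measurable_funM => //; exact: measurable_cst.
under eq_integral do rewrite pqE.
apply: le_trans (integral_norm_comb_le lam _ mX _ c _ _ mg g_ge0 _) _.
  by move=> i; exact: integral_indic_theta_star.
rewrite lee_fin; apply: le_trans (sum_dist_inv_weights_le (theta_star lam pi S)
    (rho \o th) (rho \o th') (ltnW d_gt1) theta_star_pos _ _) _;
  [exact: rho_th_gt0 hth | exact: rho_th_gt0 hth' |].
have d_ge2 : (2 : R) <= d%:R by rewrite ler_nat.
by rewrite -mulrA ler_wpM2l // ler_peMl ?sumr_ge0 //; lra.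
Qed.
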